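(* Let $q$ be a prime and $k\geq 2$, and let $f$ be a linear Latin hypercube of order $q$ and dimension $k$. Then there is a unique function $R:\mathbb{F}_q^3\to\mathbb{F}_q$ such that for every rectangle $(a,b,c,d)$ (of any two distinct directions) one has $f(a)=R(f(b),f(c),f(d))$.
   Context: A Latin hypercube of order $q$ and dimension $k$ is a function $f:\mathbb{F}_q^k\to\mathbb{F}_q$ such that fixing any $k-1$ arguments gives a bijection in the remaining argument. It is linear if there are permutations $\alpha_0,\alpha_1,\dots,\alpha_k$ of $\mathbb{F}_q$ with $\alpha_0(f(x_1,\dots,x_k))=\alpha_1(x_1)+\cdots+\alpha_k(x_k)$ for all $x$. For distinct $i,j\in\{1,\dots,k\}$, a rectangle of directions $i$ and $j$ is a quadruple $(a,b,c,d)$ of elements of $\mathbb{F}_q^k$ with $a_i=b_i$, $c_i=d_i$, $b_j=c_j$, $d_j=a_j$, and $a_l=b_l=c_l=d_l$ for all $l\notin\{i,j\}$. *)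

From HB Require Import structures.
From mathcomp Require Import all_boot all_order all_algebra all_fingroup.
Set Implicit Arguments. Unset Strict Implicit. Unset Printing Implicit Defensive.
Import GRing.Theory.
Local Open Scope ring_scope.

Definition point (q k : nat) := {ffun 'I_k -> 'F_q}.

Definition upd (q k : nat) (x : point q k) (i : 'I_k) (y : 'F_q) : point q k :=
  [ffun l => if l == i then y else x l].

Definition latin_hypercube (q k : nat) (f : point q k -> 'F_q) : Prop :=
  forall (i : 'I_k) (x : point q k), bijective (fun y : 'F_q => f (upd x i y)).

Definition linear_lh (q k : nat) (f : point q k -> 'F_q) : Prop :=
  exists (alpha0 : {perm 'F_q}) (alpha : 'I_k -> {perm 'F_q}),
    forall x : point q k, alpha0 (f x) = \sum_(i < k) alpha i (x i).

Definition rectangle (q k : nat) (i j : 'I_k) (a b c d : point q k) : Prop :=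
  [/\ i != j, a i = b i, c i = d i, b j = c j & d j = a j] /\
  forall l : 'I_k, l != i -> l != j -> [/\ a l = b l, b l = c l & c l = d l].

(** The rule is [R u v w = alpha0^-1 (alpha0 u - alpha0 v + alpha0 w)]: along a
    rectangle of directions [i], [j] the four values of [alpha_l (x_l)] cancel in
    the alternating sum [a - b + c - d] for every coordinate [l], so
    [alpha0 (f a) - alpha0 (f b) + alpha0 (f c) - alpha0 (f d) = 0].  Uniqueness
    holds because, [f] being Latin, every triple [(f b, f c, f d)] is attained by
    some rectangle, obtained by updating one base point in two directions. *)

From mathcomp Require Import all_boot all_order all_algebra all_fingroup.
From Stdlib Require Import FunctionalExtensionality.
From mathcomp Require Import ring.
Import GRing.Theory.

Set Implicit Arguments.
Unset Strict Implicit.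
Unset Printing Implicit Defensive.

Local Open Scope ring_scope.

Definition rectangle_rule (q : nat) (alpha0 : {perm 'F_q}) (u v w : 'F_q) : 'F_q :=
  (alpha0^-1)%g (alpha0 u - alpha0 v + alpha0 w).

Section LinearRectangle.

Variables (q k : nat) (f : point q k -> 'F_q).
Variables (alpha0 : {perm 'F_q}) (alpha : 'I_k -> {perm 'F_q}).
Hypothesis f_linear : forall x, alpha0 (f x) = \sum_(l < k) alpha l (x l).

Lemma rectangle_alternating_sum (i j : 'I_k) (a b c d : point q k) :
  rectangle i j a b c d ->
  alpha0 (f a) - alpha0 (f b) + alpha0 (f c) - alpha0 (f d) = 0.
Proof.
move=> [[_ ab_i cd_i bc_j da_j] same].
rewrite !f_linear -!sumrB -big_split -sumrB /=.
apply: big1 => l _.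
case: (eqVneq l i) => [->|li]; first by rewrite ab_i cd_i subrr add0r subrr.
case: (eqVneq l j) => [->|lj]; first by rewrite bc_j da_j addrNK subrr.
by have [-> -> ->] := same l li lj; rewrite subrr add0r subrr.
Qed.

Lemma linear_rectangle_rule (i j : 'I_k) (a b c d : point q k) :
  rectangle i j a b c d -> f a = rectangle_rule alpha0 (f b) (f c) (f d).
Proof.
move=> /rectangle_alternating_sum sum0.
apply: (@perm_inj _ alpha0); rewrite /rectangle_rule permKV.
by apply/eqP; rewrite -subr_eq0 -sum0; apply/eqP; ring.
Qed.

End LinearRectangle.

Lemma rectangle_upd (q k : nat) (i j : 'I_k) (c : point q k) (yi yj : 'F_q) :
  i != j ->
  rectangle i j (upd (upd c i yi) j yj) (upd c i yi) c (upd c j yj).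
Proof.
move=> ij; split; last by move=> l li lj; rewrite !ffunE (negbTE li) (negbTE lj).
by rewrite !ffunE eqxx (negbTE ij) eq_sym (negbTE ij) eqxx.
Qed.

Lemma latin_hypercube_upd_onto (q k : nat) (f : point q k -> 'F_q) :
  latin_hypercube f ->
  forall (i : 'I_k) (x : point q k) (v : 'F_q), exists y, f (upd x i y) = v.
Proof. by move=> lat i x v; have [g _ gK] := lat i x; exists (g v); rewrite gK. Qed.

Lemma latin_rectangle_values (q k : nat) (f : point q k -> 'F_q) (i j : 'I_k) :
  latin_hypercube f -> i != j -> forall u v w : 'F_q,
  exists a b c d : point q k,
    [/\ rectangle i j a b c d, f b = u, f c = v & f d = w].
Proof.
move=> /latin_hypercube_upd_onto onto ij u v w.
have [yc fc] := onto i [ffun => 0] v.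
set c := upd _ i yc in fc.
have [yi fb] := onto i c u.
have [yj fd] := onto j c w.
by exists (upd (upd c i yi) j yj), (upd c i yi), c, (upd c j yj); split=> //;
  apply: rectangle_upd.
Qed.

Theorem lemma1 (q k : nat) (hq : prime q) (hk : (2 <= k)%N)
  (f : point q k -> 'F_q) (hlat : latin_hypercube f) (hlin : linear_lh f) :
  exists! R : 'F_q -> 'F_q -> 'F_q -> 'F_q,
    forall (i j : 'I_k) (a b c d : point q k),
      rectangle i j a b c d -> f a = R (f b) (f c) (f d).
Proof.
have [alpha0 [alpha f_linear]] := hlin.
exists (rectangle_rule alpha0); split.
  by move=> i j a b c d rect; exact: (linear_rectangle_rule f_linear rect).
move=> R fR.
pose i : 'I_k := Ordinal (ltnW hk); pose j : 'I_k := Ordinal hk.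
have ij : i != j by [].
apply: functional_extensionality => u; apply: functional_extensionality => v.
apply: functional_extensionality => w.
have [a [b [c [d [rect <- <- <-]]]]] := latin_rectangle_values hlat ij u v w.
by rewrite -(fR _ _ _ _ _ _ rect) (linear_rectangle_rule f_linear rect).
Qed.
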